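(* Let $f(x,y)=\left(x+\frac1y,\ y-\frac1y-x\right)$ be the Hénon–Devaney map, with inverse $f^{-1}(u,v)=\left(u-\frac{1}{u+v},\ u+v\right)$, and write $f^{-k}(t,0)=(f^{-k}_x(t,0),f^{-k}_y(t,0))$ whenever defined. For $n\ge1$ let $S_n$ be the set of $t\in\mathbb{R}$ for which $f^{-n}(t,0)$ is defined and $f^{-j}_y(t,0)>-f^{-j}_x(t,0)$ for all $0\le j\le n-1$, and let $t_n\in S_n$ be a parameter with $f^{-n}_x(t_n,0)=0$. Then the sequence $\left(f^{-n}_y(t_n,0)\right)_{n\in\mathbb{N}}$ diverges.
   Context: Here $f^{0}(t,0)=(t,0)$, so the condition for $j=0$ reads $t>0$; e.g. $t_1=1$. *)

From Stdlib Require Import Reals.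
Open Scope R_scope.

(* Inverse Henon-Devaney map f^{-1}(u,v) = (u - 1/(u+v), u+v).
   Total function; definedness is tracked separately by [finv_defined]. *)
Definition finv (p : R * R) : R * R :=
  let (u, v) := p in (u - / (u + v), u + v).

Definition finv_iter (k : nat) (t : R) : R * R := Nat.iter k finv (t, 0).

Definition fx (k : nat) (t : R) : R := fst (finv_iter k t).
Definition fy (k : nat) (t : R) : R := snd (finv_iter k t).

Definition finv_defined (n : nat) (t : R) : Prop :=
  forall j : nat, (j < n)%nat -> fx j t + fy j t <> 0.

Definition S_set (n : nat) (t : R) : Prop :=
  finv_defined n t /\
  forall j : nat, (j <= n - 1)%nat -> fy j t > - fx j t.

(** Write [s_j = x_j + y_j] along the backward orbit [(x_j, y_j) = f^{-j}(t,0)], so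
    that [x_{j+1} = x_j - 1/s_j] and [y_{j+1} = s_j].  On [S_n] every [s_j] with
    [j < n] is positive, so [x_j] decreases; ending at [x_n = 0] it stays
    nonnegative, hence [s_{j+1} = x_{j+1} + s_j >= s_j] and all these [s_j] are
    bounded by [s_{n-1} = y_n].  Summing the steps gives
    [x_0 = sum_{j<n} 1/s_j >= n / y_n], while [x_0 = s_0 <= y_n] because [y_0 = 0].
    Thus [y_n^2 >= n], and the sequence [y_n] is unbounded. *)

From Stdlib Require Import Reals Lra Lia Psatz.
Open Scope R_scope.

Lemma fx_succ k t : fx (S k) t = fx k t - / (fx k t + fy k t).
Proof. unfold fx, fy, finv_iter; simpl; now destruct (Nat.iter k finv (t, 0)). Qed.

Lemma fy_succ k t : fy (S k) t = fx k t + fy k t.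
Proof. unfold fx, fy, finv_iter; simpl; now destruct (Nat.iter k finv (t, 0)). Qed.

Lemma fy_0 t : fy 0 t = 0.
Proof. reflexivity. Qed.

Section BackwardOrbit.

Variables (t : R) (n : nat).
Hypothesis sum_pos : forall j, (j < n)%nat -> 0 < fx j t + fy j t.
Hypothesis fx_n : fx n t = 0.

Lemma fx_nonneg k : (k <= n)%nat -> 0 <= fx k t.
Proof.
  intros Hk; remember (n - k)%nat as m eqn:Hm; revert k Hk Hm.
  induction m as [|m IH]; intros k Hk Hm.
  - replace k with n by lia; lra.
  - assert (Hnext : 0 <= fx (S k) t) by (apply IH; lia).
    assert (Hinv : 0 < / (fx k t + fy k t)) by (apply Rinv_0_lt_compat, sum_pos; lia).
    rewrite fx_succ in Hnext; lra.
Qed.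

Lemma sum_le_fy_n k : (k < n)%nat -> fx k t + fy k t <= fy n t.
Proof.
  intros Hk; remember (n - S k)%nat as m eqn:Hm; revert k Hk Hm.
  induction m as [|m IH]; intros k Hk Hm.
  - replace n with (S k) by lia; rewrite fy_succ; lra.
  - assert (Hnext : fx (S k) t + fy (S k) t <= fy n t) by (apply IH; lia).
    assert (Hx : 0 <= fx (S k) t) by (apply fx_nonneg; lia).
    rewrite fy_succ in Hnext; lra.
Qed.

Lemma fx_lower_bound k : (k <= n)%nat -> INR (n - k) <= fy n t * fx k t.
Proof.
  intros Hk; remember (n - k)%nat as m eqn:Hm; revert k Hk Hm.
  induction m as [|m IH]; intros k Hk Hm.
  - replace k with n by lia; rewrite fx_n; simpl; lra.
  - assert (Hnext : INR m <= fy n t * fx (S k) t) by (apply IH; lia).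
    assert (Hs : 0 < fx k t + fy k t) by (apply sum_pos; lia).
    assert (HsM : fx k t + fy k t <= fy n t) by (apply sum_le_fy_n; lia).
    assert (Hstep : 1 <= fy n t * / (fx k t + fy k t)).
    { apply (Rmult_le_reg_r (fx k t + fy k t)); [lra|].
      rewrite Rmult_assoc, Rinv_l; lra. }
    rewrite fx_succ in Hnext; rewrite S_INR; nra.
Qed.

Lemma fy_n_sq_ge : INR n <= fy n t ^ 2.
Proof.
  destruct (Nat.eq_dec n 0) as [Hn0 | Hn0].
  { rewrite Hn0; simpl; nra. }
  assert (H0 : INR n <= fy n t * fx 0 t).
  { rewrite <- (Nat.sub_0_r n) at 1; apply fx_lower_bound; lia. }
  assert (Hs : 0 < fx 0 t + fy 0 t) by (apply sum_pos; lia).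
  assert (HsM : fx 0 t + fy 0 t <= fy n t) by (apply sum_le_fy_n; lia).
  rewrite fy_0 in Hs, HsM; nra.
Qed.

End BackwardOrbit.

Lemma not_cv_of_sq_ge_INR (u : nat -> R) :
  (forall n, (1 <= n)%nat -> INR n <= u n ^ 2) -> ~ (exists l, Un_cv u l).
Proof.
  intros Hu [l Hl].
  destruct (Hl 1 ltac:(lra)) as [N HN].
  destruct (INR_unbounded ((Rabs l + 1) ^ 2)) as [K HK].
  set (n := S (N + K)).
  assert (Hdist : Rabs (u n - l) < 1) by (apply HN; unfold n; lia).
  assert (HKn : INR K <= INR n) by (apply le_INR; unfold n; lia).
  assert (Hsq : INR n <= u n ^ 2) by (apply Hu; unfold n; lia).
  assert (Hbound : Rabs (u n) < Rabs l + 1).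
  { pose proof (Rabs_triang (u n - l) l) as Htri.
    replace (u n - l + l) with (u n) in Htri by ring; lra. }
  rewrite <- (pow2_abs (u n)) in Hsq.
  pose proof (Rabs_pos (u n)); nra.
Qed.

Theorem mainTheorem4 :
  forall t : nat -> R,
    (forall n : nat, (1 <= n)%nat -> S_set n (t n) /\ fx n (t n) = 0) ->
    ~ (exists l : R, Un_cv (fun n => fy n (t n)) l).
Proof.
  intros t Ht; apply not_cv_of_sq_ge_INR; intros n Hn.
  destruct (Ht n Hn) as [[_ Habove] Hx].
  apply fy_n_sq_ge; [|exact Hx].
  intros j Hj; specialize (Habove j ltac:(lia)); lra.
Qed.
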